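(* Let $S$ be a commutative ring, $R$ an $S$-algebra, $E$ an injective cogenerator of $\mathrm{Mod}\text{-}S$, and $(-)^d=\operatorname{Hom}_S(-,E)$, viewed as contravariant functors from left $R$-modules to right $R$-modules and from right $R$-modules to left $R$-modules. Let $P_2\to P_1\xrightarrow{\zeta}P_0\to M\to 0$ be a projective presentation of a left $R$-module $M$ (so $0\to M^d\to P_0^d\xrightarrow{\zeta^d}P_1^d$ is an injective copresentation of the right module $M^d$). Then: (1) If $X$ is a right $R$-module with $X\in\mathcal{B}_{\zeta^d}$, then $X^d\in\mathcal{D}_\zeta$. (2) If $P_0,P_1,P_2$ are finitely presented and $Y$ is a left $R$-module with $Y\in\mathcal{D}_\zeta$, then $Y^d\in\mathcal{B}_{\zeta^d}$. (3) If $P_0,P_1,P_2$ are finitely presented, then $M$ is partial silting with respect to $\zeta$ if and only if $M^d$ is partial cosilting with respect to $\zeta^d$.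
   Context: For a homomorphism $\zeta:Q_0\to Q_1$ of right $R$-modules, $\mathcal{B}_\zeta=\{X \mid \operatorname{Hom}_R(X,\zeta):\operatorname{Hom}_R(X,Q_0)\to\operatorname{Hom}_R(X,Q_1)\text{ is an epimorphism}\}$. For a homomorphism $\sigma:P_1\to P_0$ of left $R$-modules, $\mathcal{D}_\sigma=\{Y \mid \operatorname{Hom}_R(\sigma,Y):\operatorname{Hom}_R(P_0,Y)\to\operatorname{Hom}_R(P_1,Y)\text{ is an epimorphism}\}$. A left module $M$ with projective presentation $P_1\xrightarrow{\sigma}P_0\to M\to 0$ is partial silting with respect to $\sigma$ if $M\in\mathcal{D}_\sigma$ and $\mathcal{D}_\sigma$ is closed under direct sums; it is silting with respect to $\sigma$ if $\operatorname{Gen}(M)=\mathcal{D}_\sigma$, where $\operatorname{Gen}(M)$ is the class of epimorphic images of direct sums of copies of $M$. A right module $T$ with injective copresentation $0\to T\to Q_0\xrightarrow{\zeta}Q_1$ ($Q_0,Q_1$ injective) is partial cosilting with respect to $\zeta$ if $T\in\mathcal{B}_\zeta$ and $\mathcal{B}_\zeta$ is closed under direct products; it is cosilting with respect to $\zeta$ if $\operatorname{Cogen}(T)=\mathcal{B}_\zeta$, where $\operatorname{Cogen}(T)$ is the class of modules embeddable in a direct product of copies of $T$. *)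

From HB Require Import structures.
From mathcomp Require Import all_boot all_algebra.
From Stdlib Require Import ClassicalEpsilon FunctionalExtensionality ProofIrrelevance.

Set Implicit Arguments.
Unset Strict Implicit.
Unset Printing Implicit Defensive.

Import GRing.Theory.
Local Open Scope ring_scope.

(* right R-modules are left R^c-modules).                              *)

Section ModuleNotions.
Variable A : pzRingType.

Definition Bclass (Q0 Q1 : lmodType A) (zeta : Q0 -> Q1) (X : lmodType A) : Prop :=
  forall g : {linear X -> Q1}, exists h : {linear X -> Q0},
    forall x, g x = zeta (h x).

Definition Dclass (P1 P0 : lmodType A) (sigma : P1 -> P0) (Y : lmodType A) : Prop :=
  forall g : {linear P1 -> Y}, exists h : {linear P0 -> Y},
    forall x, g x = h (sigma x).

Definition is_coproduct (I : Type) (M : I -> lmodType A) (D : lmodType A)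
    (inj : forall i, {linear M i -> D}) : Prop :=
  forall (N : lmodType A) (f : forall i, {linear M i -> N}),
    (exists h : {linear D -> N}, forall i x, h (inj i x) = f i x) /\
    (forall h1 h2 : {linear D -> N},
        (forall i x, h1 (inj i x) = h2 (inj i x)) -> forall d, h1 d = h2 d).

Definition is_product (I : Type) (M : I -> lmodType A) (D : lmodType A)
    (pr : forall i, {linear D -> M i}) : Prop :=
  forall (N : lmodType A) (f : forall i, {linear N -> M i}),
    (exists h : {linear N -> D}, forall i x, pr i (h x) = f i x) /\
    (forall h1 h2 : {linear N -> D},
        (forall i x, pr i (h1 x) = pr i (h2 x)) -> forall x, h1 x = h2 x).

Definition closed_under_sums (C : lmodType A -> Prop) : Prop :=
  forall (I : Type) (M : I -> lmodType A) (D : lmodType A)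
         (inj : forall i, {linear M i -> D}),
    is_coproduct inj -> (forall i, C (M i)) -> C D.

Definition closed_under_products (C : lmodType A -> Prop) : Prop :=
  forall (I : Type) (M : I -> lmodType A) (D : lmodType A)
         (pr : forall i, {linear D -> M i}),
    is_product pr -> (forall i, C (M i)) -> C D.

Definition projective_module (P : lmodType A) : Prop :=
  forall (U V : lmodType A) (g : {linear U -> V}) (f : {linear P -> V}),
    (forall v, exists u, g u = v) ->
    exists h : {linear P -> U}, forall p, g (h p) = f p.

Definition injective_module (Q : lmodType A) : Prop :=
  forall (U V : lmodType A) (g : {linear U -> V}) (f : {linear U -> Q}),
    injective g ->
    exists h : {linear V -> Q}, forall u, h (g u) = f u.

Definition cogenerator_module (Q : lmodType A) : Prop :=
  forall (U V : lmodType A) (g : {linear U -> V}),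
    (exists u, g u != 0) ->
    exists f : {linear V -> Q}, exists u, f (g u) != 0.

Definition finitely_presented (P : lmodType A) : Prop :=
  exists (n m : nat) (v : 'I_n -> P) (w : 'I_m -> 'I_n -> A),
    (forall p : P, exists a : 'I_n -> A, p = \sum_i a i *: v i) /\
    (forall a : 'I_n -> A, \sum_i a i *: v i = 0 <->
       exists c : 'I_m -> A, forall i, a i = \sum_j c j * w j i).

Definition projective_presentation (M P0 P1 P2 : lmodType A)
    (xi : {linear P2 -> P1}) (zeta : {linear P1 -> P0}) (pi : {linear P0 -> M})
    : Prop :=
  [/\ projective_module P0, projective_module P1 & projective_module P2] /\
  [/\ (forall m, exists p, pi p = m),
      (forall p, pi p = 0 <-> exists q, zeta q = p) &
      (forall q, zeta q = 0 <-> exists r, xi r = q)].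

End ModuleNotions.

Definition partial_silting (A : pzRingType) (P1 P0 : lmodType A)
    (sigma : P1 -> P0) (M : lmodType A) : Prop :=
  Dclass sigma M /\ closed_under_sums (Dclass sigma).

Definition partial_cosilting (A : pzRingType) (Q0 Q1 : lmodType A)
    (zeta : Q0 -> Q1) (T : lmodType A) : Prop :=
  Bclass zeta T /\ closed_under_products (Bclass zeta).

Section Classical.
Variable T : Type.

Definition ceq (x y : T) : bool :=
  if excluded_middle_informative (x = y) then true else false.

Lemma ceqP : Equality.axiom ceq.
Proof.
by move=> x y; rewrite /ceq; case: excluded_middle_informative => h;
  [apply: ReflectT | apply: ReflectF].
Qed.

Definition cfind (P : pred T) (n : nat) : option T :=
  match excluded_middle_informative (exists x, P x) with
  | left H => Some (proj1_sig (constructive_indefinite_description _ H))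
  | right _ => None
  end.

Lemma cfind_correct P n x : cfind P n = Some x -> P x.
Proof.
rewrite /cfind; case: excluded_middle_informative => // H [<-].
exact: proj2_sig (constructive_indefinite_description _ H).
Qed.

Lemma cfind_complete (P : pred T) : (exists x, P x) -> exists n, cfind P n.
Proof.
by move=> H; exists 0%N; rewrite /cfind; case: excluded_middle_informative.
Qed.

Lemma cfind_ext (P Q : pred T) : P =1 Q -> cfind P =1 cfind Q.
Proof. by move=> /functional_extensionality ->. Qed.

End Classical.

Section DualCarrier.
Variables (S : comNzRingType) (A : pzRingType) (sigma : S -> A).
Variables (E : lmodType S) (X : lmodType A).

Definition Slinear (f : X -> E) : Prop :=
  forall s x y, f (sigma s *: x + y) = s *: f x + f y.

Record dualT := Dual { dfun :> X -> E; dfunP : Slinear dfun }.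

Lemma dual_ext (f g : dualT) : (forall x, f x = g x) -> f = g.
Proof.
case: f g => f fP [g gP] /= /functional_extensionality efg.
by subst g; rewrite (proof_irrelevance _ fP gP).
Qed.

HB.instance Definition _ := hasDecEq.Build dualT (@ceqP dualT).
HB.instance Definition _ :=
  hasChoice.Build dualT (@cfind_correct dualT) (@cfind_complete dualT)
    (@cfind_ext dualT).

Lemma Slinear0 : Slinear (fun _ => 0).
Proof. by move=> s x y; rewrite scaler0 addr0. Qed.

Lemma SlinearN (f : dualT) : Slinear (fun x => - f x).
Proof. by move=> s x y; rewrite dfunP opprD scalerN. Qed.

Lemma SlinearD (f g : dualT) : Slinear (fun x => f x + g x).
Proof.
by move=> s x y; rewrite !dfunP scalerDr addrACA.
Qed.

Definition dual0 := Dual Slinear0.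
Definition dualN f := Dual (SlinearN f).
Definition dualD f g := Dual (SlinearD f g).

Lemma dualDA : associative dualD.
Proof. by move=> f g h; apply: dual_ext => x /=; rewrite addrA. Qed.
Lemma dualDC : commutative dualD.
Proof. by move=> f g; apply: dual_ext => x /=; rewrite addrC. Qed.
Lemma dual0D : left_id dual0 dualD.
Proof. by move=> f; apply: dual_ext => x /=; rewrite add0r. Qed.
Lemma dualND : left_inverse dual0 dualN dualD.
Proof. by move=> f; apply: dual_ext => x /=; rewrite addNr. Qed.

HB.instance Definition _ :=
  GRing.isZmodule.Build dualT dualDA dualDC dual0D dualND.

End DualCarrier.

Lemma Slinear_add (S : comNzRingType) (A : pzRingType) (sigma : S -> A)
  (E : lmodType S) (X : lmodType A) (f : dualT sigma E X) :
  sigma 1 = 1 -> forall x y, f (x + y) = f x + f y.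
Proof. by move=> s1 x y; have := dfunP f 1 x y; rewrite s1 !scale1r. Qed.

Section Duality.
Variables (S : comNzRingType) (R : algType S) (E : lmodType S).

Definition alg_sigma (s : S) : R := s%:A.
Definition alg_sigma_c (s : S) : R^c := (s%:A : R).

Lemma alg_sigma_central s (b : R) : alg_sigma s * b = b * alg_sigma s.
Proof. by rewrite /alg_sigma mulr_algl mulr_algr. Qed.

Lemma alg_sigma1 : alg_sigma 1 = 1. Proof. by rewrite /alg_sigma scale1r. Qed.
Lemma alg_sigma_c1 : alg_sigma_c 1 = 1. Proof. exact: alg_sigma1. Qed.

Section DualLeft.
Variable X : lmodType R.

Definition dualL := dualT alg_sigma E X.
HB.instance Definition _ := GRing.Zmodule.on dualL.

Lemma dualL_scaleP (b : R^c) (f : dualL) :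
  Slinear alg_sigma (fun x : X => f ((b : R) *: x)).
Proof.
move=> s x y; rewrite scalerDr scalerA -alg_sigma_central -scalerA.
exact: dfunP.
Qed.

Definition dualL_scale (b : R^c) (f : dualL) : dualL := Dual (dualL_scaleP b f).

Lemma dualL_scalerA a b f :
  dualL_scale a (dualL_scale b f) = dualL_scale (a * b) f.
Proof. by apply: dual_ext => x /=; rewrite scalerA. Qed.

Lemma dualL_scale1r : left_id 1 dualL_scale.
Proof. by move=> f; apply: dual_ext => x /=; rewrite scale1r. Qed.

Lemma dualL_scalerDr : right_distributive dualL_scale +%R.
Proof. by move=> b f g; apply: dual_ext => x. Qed.

Lemma dualL_scalerDl f : {morph dualL_scale^~ f : a b / a + b}.
Proof.
move=> a b; apply: dual_ext => x /=.
by rewrite scalerDl (Slinear_add _ alg_sigma1).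
Qed.

HB.instance Definition _ :=
  GRing.Zmodule_isLmodule.Build R^c dualL
    dualL_scalerA dualL_scale1r dualL_scalerDr dualL_scalerDl.

End DualLeft.

Section DualRight.
Variable X : lmodType R^c.

Definition dualR := dualT alg_sigma_c E X.
HB.instance Definition _ := GRing.Zmodule.on dualR.

Lemma alg_sigma_c_central s (b : R^c) : alg_sigma_c s * b = b * alg_sigma_c s.
Proof. exact: (esym (alg_sigma_central s b)). Qed.

Lemma dualR_scaleP (b : R) (f : dualR) :
  Slinear alg_sigma_c (fun x : X => f ((b : R^c) *: x)).
Proof.
move=> s x y; rewrite scalerDr scalerA -alg_sigma_c_central -scalerA.
exact: dfunP.
Qed.

Definition dualR_scale (b : R) (f : dualR) : dualR := Dual (dualR_scaleP b f).

Lemma dualR_scalerA a b f :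
  dualR_scale a (dualR_scale b f) = dualR_scale (a * b) f.
Proof. by apply: dual_ext => x /=; rewrite scalerA. Qed.

Lemma dualR_scale1r : left_id 1 dualR_scale.
Proof. by move=> f; apply: dual_ext => x /=; rewrite scale1r. Qed.

Lemma dualR_scalerDr : right_distributive dualR_scale +%R.
Proof. by move=> b f g; apply: dual_ext => x. Qed.

Lemma dualR_scalerDl f : {morph dualR_scale^~ f : a b / a + b}.
Proof.
move=> a b; apply: dual_ext => x /=.
by rewrite scalerDl (Slinear_add _ alg_sigma_c1).
Qed.

HB.instance Definition _ :=
  GRing.Zmodule_isLmodule.Build R dualR
    dualR_scalerA dualR_scale1r dualR_scalerDr dualR_scalerDl.

End DualRight.

Section DualMap.
Variables (P1 P0 : lmodType R) (zeta : {linear P1 -> P0}).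

Lemma dualmap_subproof (phi : dualL P0) :
  Slinear alg_sigma (fun x : P1 => phi (zeta x)).
Proof. by move=> s x y; rewrite linearP; exact: dfunP. Qed.

Definition dualmap (phi : dualL P0) : dualL P1 := Dual (dualmap_subproof phi).

End DualMap.

End Duality.

Arguments dualL {S R} E X.
Arguments dualR {S R} E X.
Arguments dualmap {S R} E {P1 P0} zeta phi.

(* (1) is the adjunction Hom_R(P, X^d) = Hom_R(X, P^d), both sides being the
   S-bilinear maps P x X -> E.  For (2) and (3) fix finite presentations
   P1 = <u | w1>, P0 = <v | w0> and a matrix z with zeta u_k = sum_l z_kl v_l.
   Then Y lies in D_zeta iff every solution of w1 y = 0 in Y is z y' for a
   solution of w0 y' = 0, and X lies in B_(zeta^d) iff every row t over X with
   t z in the row space of w0 lies in the row space of w1.  Because E is an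
   injective cogenerator, the functionals on Y^n killing the solutions of
   c y = 0 are exactly the rows s c over Y^d, and this duality turns the first
   condition for Y into the second one for Y^d.  The row condition is clearly
   stable under products, and the dual of a direct sum is the product of the
   duals, which gives the closure properties in (3). *)

From HB Require Import structures.
From mathcomp Require Import all_boot all_algebra.
From Stdlib Require Import Classical ClassicalEpsilon FunctionalExtensionality.
From Stdlib Require Import ProofIrrelevance PropExtensionality.

Set Implicit Arguments.
Unset Strict Implicit.
Unset Printing Implicit Defensive.

Import GRing.Theory.
Local Open Scope ring_scope.

Definition linear_of (A : pzRingType) (U W : lmodType A) (f : U -> W)
    (lin_f : linear f) : {linear U -> W} :=
  HB.pack f (GRing.isLinear.Build A U W *:%R f lin_f).

Lemma scale_linear (A : pzRingType) (V : lmodType A) (x : V) :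
  linear (fun a : A^o => (a : A) *: x).
Proof. by move=> a b c; rewrite scalerDl scalerA. Qed.

Section DualFunTheory.
Variables (S : comNzRingType) (A : pzRingType) (sig : S -> A).
Variables (E : lmodType S) (X : lmodType A).
Hypothesis sig1 : sig 1 = 1.
Implicit Types f : dualT sig E X.

Lemma dfunD f x y : f (x + y) = f x + f y.
Proof. exact: Slinear_add. Qed.

Lemma dfun0 f : f 0 = 0.
Proof. by apply: (@addrI _ (f 0)); rewrite -dfunD !addr0. Qed.

Lemma dfunZ f s x : f (sig s *: x) = s *: f x.
Proof. by have := dfunP f s x 0; rewrite addr0 dfun0 addr0. Qed.

Lemma dfun_sum f I r (P : pred I) (F : I -> X) :
  f (\sum_(i <- r | P i) F i) = \sum_(i <- r | P i) f (F i).
Proof. by elim/big_rec2: _ => [|i a b _ <-]; rewrite ?dfun0 ?dfunD. Qed.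

Lemma dual_addE f g x : (f + g) x = f x + g x. Proof. by []. Qed.

Lemma dual_sumE I r (P : pred I) (F : I -> dualT sig E X) x :
  (\sum_(i <- r | P i) F i) x = \sum_(i <- r | P i) F i x.
Proof. by elim/big_rec2: _ => [|i a b _ <-]. Qed.

End DualFunTheory.

Section RestrictScalars.
Variables (S : comNzRingType) (A : pzRingType) (sig : S -> A) (V : lmodType A).
Hypotheses (sig1 : sig 1 = 1) (sigD : {morph sig : a b / a + b})
  (sigM : {morph sig : a b / a * b}).

Definition sres_scale (a : S) (v : V) : V := sig a *: v.

Lemma sres_scalerA a b v : sres_scale a (sres_scale b v) = sres_scale (a * b) v.
Proof. by rewrite /sres_scale scalerA sigM. Qed.
Lemma sres_scale1r : left_id 1 sres_scale.
Proof. by move=> v; rewrite /sres_scale sig1 scale1r. Qed.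
Lemma sres_scalerDr : right_distributive sres_scale +%R.
Proof. by move=> a u v; rewrite /sres_scale scalerDr. Qed.
Lemma sres_scalerDl v : {morph sres_scale^~ v : a b / a + b}.
Proof. by move=> a b; rewrite /sres_scale sigD scalerDl. Qed.

End RestrictScalars.

Section QuotientModule.
Variables (A : pzRingType) (V : lmodType A).

Definition is_submod (P : V -> Prop) :=
  P 0 /\ forall a x y, P x -> P y -> P (a *: x - y).

Variables (P : V -> Prop) (HP : is_submod P).

Lemma is_submod0 : P 0. Proof. by case: HP. Qed.
Lemma is_submodN x : P x -> P (- x).
Proof. by case: HP => P0 PB Px; have := PB 0 0 x P0 Px; rewrite scaler0 add0r. Qed.
Lemma is_submodD x y : P x -> P y -> P (x + y).
Proof.
by case: HP => _ PB Px /is_submodN Py; have := PB 1 x _ Px Py; rewrite scale1r opprK.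
Qed.
Lemma is_submodZ a x : P x -> P (a *: x).
Proof. by case: HP => P0 PB Px; have := PB a x 0 Px P0; rewrite subr0. Qed.
Lemma is_submodB x y : P x -> P y -> P (x - y).
Proof. by move=> Px /is_submodN; apply: is_submodD. Qed.

Definition qrep (v : V) : V := epsilon (inhabits 0) (fun w => P (w - v)).

Lemma qrepP v : P (qrep v - v).
Proof.
apply: (epsilon_spec (inhabits 0) (fun w => P (w - v))).
by exists v; rewrite subrr; exact: is_submod0.
Qed.

Lemma qrep_eq u v : P (u - v) -> qrep u = qrep v.
Proof.
move=> Puv; rewrite /qrep; congr epsilon; apply: functional_extensionality => w.
apply: propositional_extensionality; split => Pw.
  by have := is_submodD Pw Puv; rewrite addrA subrK.
by have := is_submodB Pw Puv; rewrite opprB addrA subrK.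
Qed.

Lemma qrep_id v : qrep (qrep v) = qrep v.
Proof. exact: qrep_eq (qrepP v). Qed.

(* V / P is modelled by the canonical representatives chosen by [qrep]. *)
Definition quot_mod (_ : is_submod P) := {v : V | qrep v = v}.

HB.instance Definition _ := hasDecEq.Build (quot_mod HP) (@ceqP _).
HB.instance Definition _ := hasChoice.Build (quot_mod HP)
  (@cfind_correct _) (@cfind_complete _) (@cfind_ext _).

Definition qproj (v : V) : quot_mod HP := exist _ (qrep v) (qrep_id v).

Lemma qproj_eqP u v : qproj u = qproj v <-> P (u - v).
Proof.
split=> [[] e|Puv]; last first.
  by apply: eq_sig_hprop => [x p q|]; [exact: proof_irrelevance|exact: qrep_eq].
by have := is_submodB (qrepP v) (qrepP u); rewrite e opprB addrC addrA subrK.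
Qed.

Lemma qproj_val x : qproj (sval x) = x.
Proof.
by case: x => v e; apply: eq_sig_hprop => [x p q|//]; exact: proof_irrelevance.
Qed.

Lemma qprojDl u w : qproj (qrep u + w) = qproj (u + w).
Proof. by apply/qproj_eqP; rewrite opprD addrACA subrr addr0; exact: qrepP. Qed.

Lemma qprojDr u w : qproj (w + qrep u) = qproj (w + u).
Proof. by rewrite addrC qprojDl addrC. Qed.

Lemma qprojZ a u : qproj (a *: qrep u) = qproj (a *: u).
Proof. by apply/qproj_eqP; rewrite -scalerBr; apply: is_submodZ; exact: qrepP. Qed.

Definition qadd (x y : quot_mod HP) := qproj (sval x + sval y).
Definition qopp (x : quot_mod HP) := qproj (- sval x).
Definition qscale a (x : quot_mod HP) := qproj (a *: sval x).

Lemma qaddA : associative qadd.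
Proof. by move=> x y z; rewrite /qadd /= qprojDl qprojDr addrA. Qed.
Lemma qaddC : commutative qadd.
Proof. by move=> x y; rewrite /qadd addrC. Qed.
Lemma qadd0 : left_id (qproj 0) qadd.
Proof. by move=> x; rewrite /qadd /= qprojDl add0r qproj_val. Qed.
Lemma qaddN : left_inverse (qproj 0) qopp qadd.
Proof. by move=> x; rewrite /qadd /= qprojDl addNr. Qed.

HB.instance Definition _ :=
  GRing.isZmodule.Build (quot_mod HP) qaddA qaddC qadd0 qaddN.

Lemma qscalerA a b x : qscale a (qscale b x) = qscale (a * b) x.
Proof. by rewrite /qscale /= qprojZ scalerA. Qed.
Lemma qscale1r : left_id 1 qscale.
Proof. by move=> x; rewrite /qscale scale1r qproj_val. Qed.
Lemma qscalerDr : right_distributive qscale +%R.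
Proof.
by move=> a x y; rewrite /GRing.add /= /qadd /qscale /= qprojZ qprojDl qprojDr scalerDr.
Qed.
Lemma qscalerDl x : {morph qscale^~ x : a b / a + b}.
Proof.
by move=> a b; rewrite /GRing.add /= /qadd /qscale /= qprojDl qprojDr scalerDl.
Qed.

HB.instance Definition _ := GRing.Zmodule_isLmodule.Build A (quot_mod HP)
  qscalerA qscale1r qscalerDr qscalerDl.

Lemma qproj_linear : linear qproj.
Proof.
move=> a u v; rewrite /GRing.add /= /qadd /= qprojDl qprojDr.
apply/qproj_eqP; rewrite opprD addrACA subrr addr0 -scalerBr; apply: is_submodZ.
by rewrite -opprB; apply: is_submodN; exact: qrepP.
Qed.

Definition quot_proj : {linear V -> quot_mod HP} := linear_of qproj_linear.

Lemma quot_proj_eq0 v : quot_proj v = 0 <-> P v.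
Proof. by rewrite -[0]/(qproj 0) qproj_eqP subr0. Qed.

Section Lift.
Variables (W : lmodType A) (phi : {linear V -> W}).
Hypothesis phiP : forall v, P v -> phi v = 0.

Lemma phi_qrep v : phi (qrep v) = phi v.
Proof. by apply/eqP; rewrite -subr_eq0 -linearB phiP //; exact: qrepP. Qed.

Lemma quot_lift_linear : linear (fun x : quot_mod HP => phi (sval x)).
Proof.
by move=> a x y; rewrite /GRing.add /= /qadd /= phi_qrep linearD phi_qrep linearZ.
Qed.

Definition quot_lift : {linear quot_mod HP -> W} := linear_of quot_lift_linear.

Lemma quot_liftE v : quot_lift (quot_proj v) = phi v.
Proof. exact: phi_qrep. Qed.

End Lift.
End QuotientModule.

Arguments qproj_eqP {A V P HP u v}.
Arguments qproj_val {A V P HP} x.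
Arguments quot_proj_eq0 {A V P HP v}.
Arguments quot_lift {A V P} HP {W} phi phiP.
Arguments quot_liftE {A V P} HP {W} phi phiP v.

Section InjectiveCogenerator.
Variables (A : pzRingType) (E : lmodType A).

Lemma injective_extend_ker (E_inj : injective_module E) (U V : lmodType A)
    (g : {linear U -> V}) (f : {linear U -> E}) :
  (forall u, g u = 0 -> f u = 0) ->
  exists h : {linear V -> E}, forall u, h (g u) = f u.
Proof.
move=> kergf.
have Hker : is_submod (fun u => g u = 0).
  split=> [|a x y gx gy]; first exact: linear0.
  by rewrite linearB linearZ /= gx gy scaler0 subrr.
have gK : injective (quot_lift Hker g (fun _ => id)).
  move=> x y /= e; rewrite -(qproj_val x) -(qproj_val y).
  by apply/qproj_eqP; rewrite linearB /= e subrr.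
have [h hgf] := E_inj _ _ _ (quot_lift Hker f kergf) gK.
by exists h => u; have := hgf (quot_proj Hker u); rewrite !quot_liftE.
Qed.

Lemma cogenerator_separates (E_cog : cogenerator_module E) (V : lmodType A)
    (P : V -> Prop) (HP : is_submod P) v :
  ~ P v -> exists f : {linear V -> E}, (forall x, P x -> f x = 0) /\ f v != 0.
Proof.
move=> nPv.
have [|f [a fa]] := E_cog _ _ (linear_of (scale_linear (quot_proj HP v))).
  by exists 1; rewrite /= scale1r; apply/eqP => /quot_proj_eq0.
have lin_fq : linear (fun x => f (quot_proj HP x)) by move=> b x y; rewrite !linearP.
exists (linear_of lin_fq); split=> [x /quot_proj_eq0 /= -> |]; first exact: linear0.
by apply: contra fa; rewrite /= linearZ /= => /eqP ->; rewrite scaler0.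
Qed.

End InjectiveCogenerator.

Arguments injective_extend_ker {A E} E_inj {U V} g f.

Lemma sum_if_eq (V : nmodType) n (i : 'I_n) (F : 'I_n -> V) :
  \sum_k (if k == i then F k else 0) = F i.
Proof. by rewrite -big_mkcond big_pred1_eq. Qed.

Section DualModules.
Variables (S : comNzRingType) (R : algType S) (E : lmodType S).

Lemma alg_sigmaD : {morph alg_sigma R : a b / a + b}.
Proof. by move=> a b; rewrite /alg_sigma scalerDl. Qed.
Lemma alg_sigmaM : {morph alg_sigma R : a b / a * b}.
Proof. by move=> a b; rewrite /alg_sigma -scalerA mulr_algl. Qed.
Lemma alg_sigma_cM : {morph alg_sigma_c R : a b / a * b}.
Proof. by move=> a b; rewrite /= mulrC; exact: alg_sigmaM. Qed.

(* Left and right R-modules as S-modules, so that the properties of E apply. *)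
Definition sresL (V : lmodType R) : Type := V.
HB.instance Definition _ (V : lmodType R) := GRing.Zmodule.on (sresL V).
HB.instance Definition _ (V : lmodType R) :=
  GRing.Zmodule_isLmodule.Build S (sresL V)
    (sres_scalerA (V := V) alg_sigmaM) (sres_scale1r (V := V) (alg_sigma1 R))
    (@sres_scalerDr _ _ _ V) (sres_scalerDl (V := V) alg_sigmaD).

Definition sresR (V : lmodType R^c) : Type := V.
HB.instance Definition _ (V : lmodType R^c) := GRing.Zmodule.on (sresR V).
HB.instance Definition _ (V : lmodType R^c) :=
  GRing.Zmodule_isLmodule.Build S (sresR V)
    (sres_scalerA (V := V) alg_sigma_cM) (sres_scale1r (V := V) (alg_sigma_c1 R))
    (@sres_scalerDr _ _ _ V) (sres_scalerDl (V := V) alg_sigmaD).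

Section DualLTheory.
Variable Y : lmodType R.
Implicit Types f : dualL E Y.

Lemma dualL_scaleE (r : R^c) f y : (r *: f) y = f ((r : R) *: y). Proof. by []. Qed.
Lemma dualLD f y y' : f (y + y') = f y + f y'. Proof. exact: (dfunD (alg_sigma1 R)). Qed.
Lemma dualL0 f : f 0 = 0. Proof. exact: (dfun0 (alg_sigma1 R)). Qed.
Lemma dualLZ f a y : f (alg_sigma R a *: y) = a *: f y.
Proof. exact: (dfunZ (alg_sigma1 R)). Qed.
Lemma dualL_sum f I r (P : pred I) (F : I -> Y) :
  f (\sum_(i <- r | P i) F i) = \sum_(i <- r | P i) f (F i).
Proof. exact: (dfun_sum (alg_sigma1 R)). Qed.

End DualLTheory.

Section DualRTheory.
Variable X : lmodType R^c.
Implicit Types f : dualR E X.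

Lemma dualR_scaleE (r : R) f x : (r *: f) x = f ((r : R^c) *: x). Proof. by []. Qed.
Lemma dualRD f x x' : f (x + x') = f x + f x'.
Proof. exact: (dfunD (alg_sigma_c1 R)). Qed.
Lemma dualRZ f a x : f (alg_sigma_c R a *: x) = a *: f x.
Proof. exact: (dfunZ (alg_sigma_c1 R)). Qed.

End DualRTheory.

Section Adjunction.
Variables (X : lmodType R^c) (P : lmodType R).

Lemma flip_to_dualL_subproof (g : {linear P -> dualR E X}) x :
  Slinear (alg_sigma R) (fun p => g p x).
Proof. by move=> a p q; rewrite linearP dual_addE dualR_scaleE dualRZ. Qed.

Lemma flip_to_dualL_linear (g : {linear P -> dualR E X}) :
  linear (fun x => Dual (flip_to_dualL_subproof g x) : dualL E P).
Proof. by move=> r x y; apply: dual_ext => p /=; rewrite dualRD linearZ. Qed.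

Definition flip_to_dualL g : {linear X -> dualL E P} :=
  linear_of (flip_to_dualL_linear g).

Lemma flip_to_dualR_subproof (h : {linear X -> dualL E P}) p :
  Slinear (alg_sigma_c R) (fun x => h x p).
Proof. by move=> a x y; rewrite linearP dual_addE dualL_scaleE dualLZ. Qed.

Lemma flip_to_dualR_linear (h : {linear X -> dualL E P}) :
  linear (fun p => Dual (flip_to_dualR_subproof h p) : dualR E X).
Proof. by move=> r p q; apply: dual_ext => x /=; rewrite dualLD linearZ. Qed.

Definition flip_to_dualR h : {linear P -> dualR E X} :=
  linear_of (flip_to_dualR_linear h).

End Adjunction.

Lemma dualR_Dclass (P1 P0 : lmodType R) (zeta : {linear P1 -> P0}) (X : lmodType R^c) :
  Bclass (dualmap E zeta) X -> Dclass zeta (dualR E X).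
Proof.
move=> BX g; have [h gh] := BX (flip_to_dualL g).
exists (flip_to_dualR h) => p; apply: dual_ext => x.
by rewrite -[LHS]/(flip_to_dualL g x p) gh.
Qed.

Lemma dualmap_linear (M D : lmodType R) (f : {linear M -> D}) : linear (dualmap E f).
Proof. by move=> r x y; apply: dual_ext => m /=; rewrite linearZ. Qed.

Definition dual_lin (M D : lmodType R) (f : {linear M -> D}) :
  {linear dualL E D -> dualL E M} := linear_of (dualmap_linear f).

Lemma dual_coproduct (I : Type) (M : I -> lmodType R) (D : lmodType R)
    (inj : forall i, {linear M i -> D}) :
  is_coproduct inj ->
  is_product (M := fun i => dualL E (M i)) (fun i => dual_lin (inj i)).
Proof.
move=> coD N f; have [[h hf] h_uniq] := coD _ (fun i => flip_to_dualR (f i)).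
split=> [|h1 h2 h12 x].
  by exists (flip_to_dualL h) => i x; apply: dual_ext => m /=; rewrite hf.
apply: dual_ext => d.
rewrite -[LHS]/(flip_to_dualR h1 d x) -[RHS]/(flip_to_dualR h2 d x); congr dfun.
apply: h_uniq => i m; apply: dual_ext => y.
exact: (congr1 (fun g => dfun g m) (h12 i y)).
Qed.

End DualModules.

Section Products.
Variables (A : pzRingType) (I : Type) (M : I -> lmodType A) (D : lmodType A).
Variables (pr : forall i, {linear D -> M i}) (prodD : is_product pr).

Lemma is_product_tuple (x : forall i, M i) : exists d, forall i, pr i d = x i.
Proof.
have [[h hx] _] := prodD (fun i => linear_of (scale_linear (x i))).
by exists (h 1) => i; rewrite hx /= scale1r.
Qed.

Lemma is_product_eq d d' : (forall i, pr i d = pr i d') -> d = d'.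
Proof.
move=> prdd'; have [_ uniq] := prodD (fun i => linear_of (scale_linear (pr i d))).
have := uniq (linear_of (scale_linear d)) (linear_of (scale_linear d')) _ 1.
by rewrite /= !scale1r; apply=> i a; rewrite /= !linearZ /= prdd'.
Qed.

End Products.

Section Combinations.
Variable R : pzRingType.

(* [lcomb c y] is the column [c y] in a left module, [rcomb c s] the row [s c] *)
(* in a right module.                                                          *)
Definition lcomb (Y : lmodType R) m n (c : 'I_m -> 'I_n -> R) (y : 'I_n -> Y) :
  'I_m -> Y := fun j => \sum_i c j i *: y i.

Definition rcomb (X : lmodType R^c) m n (c : 'I_m -> 'I_n -> R) (s : 'I_m -> X) :
  'I_n -> X := fun i => \sum_j (c j i : R^c) *: s j.

Variables (m n : nat) (c : 'I_m -> 'I_n -> R).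

Lemma rcomb_ext (X : lmodType R^c) (s s' : 'I_m -> X) :
  s =1 s' -> rcomb c s =1 rcomb c s'.
Proof. by move=> ss' i; apply: eq_bigr => j _; rewrite ss'. Qed.

Lemma rcomb0 (X : lmodType R^c) (s : 'I_m -> X) :
  s =1 (fun=> 0) -> rcomb c s =1 (fun=> 0).
Proof. by move=> s0 i; apply: big1 => j _; rewrite s0 scaler0. Qed.

Lemma rcombD (X : lmodType R^c) (s s' : 'I_m -> X) i :
  rcomb c (fun j => s j + s' j) i = rcomb c s i + rcomb c s' i.
Proof. by rewrite /rcomb -big_split; apply: eq_bigr => j _; rewrite scalerDr. Qed.

Lemma rcombN (X : lmodType R^c) (s : 'I_m -> X) i :
  rcomb c (fun j => - s j) i = - rcomb c s i.
Proof. by rewrite /rcomb -sumrN; apply: eq_bigr => j _; rewrite scalerN. Qed.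

Lemma lcomb_linear (P Y : lmodType R) (f : {linear P -> Y}) (v : 'I_n -> P) j :
  lcomb c (fun i => f (v i)) j = f (\sum_i c j i *: v i).
Proof. by rewrite linear_sum; apply: eq_bigr => i _; rewrite linearZ. Qed.

Lemma sum_lcomb (Y : lmodType R) (a : 'I_m -> R) (y : 'I_n -> Y) :
  \sum_j a j *: lcomb c y j = \sum_i (\sum_j a j * c j i) *: y i.
Proof.
under eq_bigr do rewrite scaler_sumr; rewrite exchange_big; apply: eq_bigr => i _.
by rewrite scaler_suml; apply: eq_bigr => j _; rewrite scalerA.
Qed.

Lemma linear_rcomb (X Z : lmodType R^c) (f : {linear X -> Z}) (s : 'I_m -> X) i :
  f (rcomb c s i) = rcomb c (fun j => f (s j)) i.
Proof. by rewrite linear_sum; apply: eq_bigr => j _; rewrite linearZ. Qed.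

End Combinations.

Section AlgCombinations.
Variables (S : comNzRingType) (R : algType S) (E : lmodType S).
Variables (m n : nat) (c : 'I_m -> 'I_n -> R).

Lemma rcombZ (X : lmodType R^c) (s : 'I_m -> X) a i :
  rcomb c (fun j => alg_sigma_c R a *: s j) i = alg_sigma_c R a *: rcomb c s i.
Proof.
rewrite /rcomb scaler_sumr; apply: eq_bigr => j _.
by rewrite !scalerA alg_sigma_c_central.
Qed.

Lemma lcombB (Y : lmodType R) (y y' : 'I_n -> Y) a j :
  lcomb c (fun i => alg_sigma R a *: y i - y' i) j =
  alg_sigma R a *: lcomb c y j - lcomb c y' j.
Proof.
rewrite /lcomb scaler_sumr -sumrB; apply: eq_bigr => i _.
by rewrite scalerBr !scalerA alg_sigma_central.
Qed.

Lemma pairing_rcomb (Y : lmodType R) (t : 'I_m -> dualL E Y) (y : 'I_n -> Y) :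
  \sum_i rcomb c t i (y i) = \sum_j t j (lcomb c y j).
Proof.
under eq_bigr do rewrite dual_sumE.
by rewrite exchange_big; apply: eq_bigr => j _; rewrite dualL_sum.
Qed.

Lemma pairing_rcomb_linear (X : lmodType R^c) (P : lmodType R)
    (h : {linear X -> dualL E P}) (s : 'I_m -> X) (v : 'I_n -> P) :
  \sum_i h (rcomb c s i) (v i) = \sum_j h (s j) (\sum_i c j i *: v i).
Proof.
under eq_bigr do rewrite linear_rcomb.
by rewrite pairing_rcomb; apply: eq_bigr => j _.
Qed.

Definition delta_ffun (Y : lmodType R) k (j : 'I_k) (y : Y) : sresL {ffun 'I_k -> Y} :=
  [ffun j' => if j' == j then y else 0].

Lemma delta_ffunP (Y : lmodType R) k (j : 'I_k) a (y y' : Y) :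
  delta_ffun j (alg_sigma R a *: y + y') = a *: delta_ffun j y + delta_ffun j y'.
Proof.
by apply/ffunP => j'; rewrite !ffunE; case: (j' == j); rewrite ?scaler0 ?addr0.
Qed.

Lemma ffun_delta_sum (Y : lmodType R) k (y : {ffun 'I_k -> Y}) :
  (y : sresL _) = \sum_j delta_ffun j (y j).
Proof.
apply/ffunP => j; rewrite sum_ffunE.
by under eq_bigr do rewrite ffunE eq_sym; rewrite sum_if_eq.
Qed.

Lemma lcomb_delta (Y : lmodType R) i (y : Y) j :
  lcomb c (delta_ffun i y) j = c j i *: y.
Proof.
rewrite /lcomb (eq_bigr (fun i' => if i' == i then c j i' *: y else 0)).
  exact: sum_if_eq.
by move=> i' _; rewrite ffunE; case: eqP; rewrite ?scaler0.
Qed.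

Lemma dual_delta_subproof (Y : lmodType R) k (j : 'I_k)
    (f : {linear sresL {ffun 'I_k -> Y} -> E}) :
  Slinear (alg_sigma R) (fun y => f (delta_ffun j y)).
Proof. by move=> a y y'; rewrite delta_ffunP linearP. Qed.

Definition dual_delta (Y : lmodType R) k (j : 'I_k)
    (f : {linear sresL {ffun 'I_k -> Y} -> E}) : dualL E Y :=
  Dual (dual_delta_subproof j f).

Lemma dual_delta_sum (Y : lmodType R) k (f : {linear sresL {ffun 'I_k -> Y} -> E})
    (y : 'I_k -> Y) :
  \sum_j dual_delta j f (y j) = f [ffun j => y j].
Proof.
rewrite (ffun_delta_sum [ffun j => y j]) linear_sum.
by apply: eq_bigr => j _; rewrite ffunE.
Qed.

(* [s] is read off an extension of [y |-> sum_i t_i y_i] along [y |-> c y]. *)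
Lemma rcomb_of_annihilator (E_inj : injective_module E) (Y : lmodType R)
    (t : 'I_n -> dualL E Y) :
  (forall y : 'I_n -> Y, (forall j, lcomb c y j = 0) -> \sum_i t i (y i) = 0) ->
  exists s : 'I_m -> dualL E Y, forall i, t i = rcomb c s i.
Proof.
move=> t_ann.
have lin_t : linear (fun y : sresL {ffun 'I_n -> Y} => \sum_i t i (y i)).
  move=> a y y'; rewrite scaler_sumr -big_split; apply: eq_bigr => i _.
  by rewrite !ffunE dualLD dualLZ.
have lin_c : linear (fun y : sresL {ffun 'I_n -> Y} =>
    [ffun j => lcomb c y j] : sresL {ffun 'I_m -> Y}).
  move=> a y y'; apply/ffunP => j; rewrite !ffunE /lcomb scaler_sumr -big_split.
  by apply: eq_bigr => i _; rewrite !ffunE scalerDr !scalerA alg_sigma_central.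
have [|f ft] := injective_extend_ker E_inj (linear_of lin_c) (linear_of lin_t).
  move=> y /= /ffunP y0; apply: t_ann => j.
  by have := y0 j; rewrite !ffunE.
exists (fun j => dual_delta j f) => i; apply: dual_ext => y /=.
rewrite dual_sumE; under eq_bigr do rewrite dualL_scaleE /=.
rewrite -linear_sum.
have -> : \sum_j delta_ffun j (c j i *: y) = linear_of lin_c (delta_ffun i y).
  apply/ffunP => j; rewrite sum_ffunE /= !ffunE lcomb_delta.
  by under eq_bigr do rewrite ffunE eq_sym; rewrite sum_if_eq.
rewrite ft /=; under eq_bigr => k _ do rewrite ffunE (fun_if (t k)) dualL0.
by rewrite sum_if_eq.
Qed.

End AlgCombinations.

Definition presents (R : pzRingType) (P : lmodType R) n m
    (v : 'I_n -> P) (w : 'I_m -> 'I_n -> R) : Prop :=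
  (forall p : P, exists a : 'I_n -> R, p = \sum_i a i *: v i) /\
  (forall a : 'I_n -> R, \sum_i a i *: v i = 0 <->
     exists c : 'I_m -> R, forall i, a i = \sum_j c j * w j i).

Lemma sum_delta_scale (R : pzRingType) (P : lmodType R) n (v : 'I_n -> P) i :
  \sum_k (if k == i then 1 else 0) *: v k = v i.
Proof.
under eq_bigr do rewrite (fun_if (fun a => a *: v _)) scale1r scale0r.
exact: sum_if_eq.
Qed.

Section FinitePresentation.
Variables (R : pzRingType) (P : lmodType R) (n m : nat).
Variables (v : 'I_n -> P) (w : 'I_m -> 'I_n -> R) (presP : presents v w).

Definition fp_coef (p : P) : 'I_n -> R :=
  proj1_sig (constructive_indefinite_description _ (presP.1 p)).

Lemma fp_coefP p : p = \sum_i fp_coef p i *: v i.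
Proof. exact: proj2_sig (constructive_indefinite_description _ (presP.1 p)). Qed.

Lemma fp_rel0 j : \sum_i w j i *: v i = 0.
Proof.
apply/presP.2; exists (fun j' => if j' == j then 1 else 0) => i.
by under eq_bigr do rewrite (fun_if (fun a => a * w _ i)) mul1r mul0r; rewrite sum_if_eq.
Qed.

Lemma fp_coef_wd (V : zmodType) (F : ('I_n -> R) -> V) :
  (forall a b, F (fun i => a i + b i) = F a + F b) ->
  (forall c : 'I_m -> R, F (fun i => \sum_j c j * w j i) = 0) ->
  forall p a, p = \sum_i a i *: v i -> F a = F (fp_coef p).
Proof.
move=> FD Frel p a pa.
have : \sum_i (a i - fp_coef p i) *: v i = 0.
  by under eq_bigr do rewrite scalerBl; rewrite sumrB -pa -fp_coefP subrr.
case/presP.2 => c ac.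
have -> : a = fun i => fp_coef p i + \sum_j c j * w j i.
  by apply: functional_extensionality => i; rewrite -ac addrC subrK.
by rewrite FD Frel addr0.
Qed.

Lemma fp_coef_comb r p q : \sum_i (r * fp_coef p i + fp_coef q i) *: v i = r *: p + q.
Proof.
rewrite [in RHS](fp_coefP p) [in RHS](fp_coefP q) scaler_sumr -big_split /=.
by apply: eq_bigr => i _; rewrite scalerDl scalerA.
Qed.

Lemma fp_extend (Y : lmodType R) (y : 'I_n -> Y) : (forall j, lcomb w y j = 0) ->
  exists f : {linear P -> Y}, forall a, f (\sum_i a i *: v i) = \sum_i a i *: y i.
Proof.
move=> wy0; pose F (a : 'I_n -> R) := \sum_i a i *: y i.
have FD a b : F (fun i => a i + b i) = F a + F b.
  by rewrite /F -big_split; apply: eq_bigr => i _; rewrite scalerDl.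
have Frel c : F (fun i => \sum_j c j * w j i) = 0.
  rewrite /F; under eq_bigr do rewrite scaler_suml.
  rewrite exchange_big big1 // => j _.
  by under eq_bigr do rewrite -scalerA; rewrite -scaler_sumr -/(lcomb w y j) wy0 scaler0.
have F_wd := fp_coef_wd FD Frel.
have lin_F : linear (fun p => F (fp_coef p)).
  move=> r p q; rewrite -(F_wd _ _ (esym (fp_coef_comb r p q))) /F scaler_sumr -big_split.
  by apply: eq_bigr => i _; rewrite scalerDl scalerA.
by exists (linear_of lin_F) => a /=; rewrite -(F_wd _ a erefl).
Qed.

End FinitePresentation.

Section FinitePresentationDual.
Variables (S : comNzRingType) (R : algType S) (E : lmodType S).
Variables (P : lmodType R) (n m : nat).
Variables (v : 'I_n -> P) (w : 'I_m -> 'I_n -> R) (presP : presents v w).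

(* A map [X -> P^d] amounts to an S-linear functional on [X^n] that kills the   *)
(* rows [s w]: it sends [x] to the functional [sum_i c_i v_i |-> Psi (c x)].    *)
Lemma fp_dual_extend (X : lmodType R^c) (Psi : {linear sresR {ffun 'I_n -> X} -> E}) :
  (forall s, Psi [ffun i => rcomb w s i] = 0) ->
  exists h : {linear X -> dualL E P}, forall x (c : 'I_n -> R),
    h x (\sum_i c i *: v i) = Psi [ffun i => (c i : R^c) *: x].
Proof.
move=> Psi_rel; pose F (x : X) (c : 'I_n -> R) := Psi [ffun i => (c i : R^c) *: x].
have FD x a b : F x (fun i => a i + b i) = F x a + F x b.
  by rewrite /F -linearD; apply: f_equal; apply/ffunP => i; rewrite !ffunE scalerDl.
have Frel x c : F x (fun i => \sum_j c j * w j i) = 0.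
  rewrite /F -(Psi_rel (fun j => (c j : R^c) *: x)); apply: f_equal; apply/ffunP => i.
  by rewrite !ffunE /rcomb scaler_suml; apply: eq_bigr => j _; rewrite scalerA.
have F_wd x := fp_coef_wd presP (FD x) (Frel x).
have FP x : Slinear (alg_sigma R) (fun p => F x (fp_coef presP p)).
  move=> a p q; rewrite -(F_wd x _ _ (esym (fp_coef_comb presP _ p q))) FD -linearZ.
  congr (_ + _); rewrite /F; apply: f_equal; apply/ffunP => i.
  by rewrite !ffunE /= /sres_scale scalerA; congr (_ *: _); exact: alg_sigma_central.
have lin_h : linear (fun x => Dual (FP x) : dualL E P).
  move=> r x y; apply: dual_ext => p /=.
  have rp : (r : R) *: p = \sum_i ((r : R) * fp_coef presP p i) *: v i.
    rewrite [in LHS](fp_coefP presP p) scaler_sumr.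
    by apply: eq_bigr => i _; rewrite scalerA.
  rewrite -(F_wd x _ _ rp) /F -linearD; apply: f_equal; apply/ffunP => i.
  by rewrite !ffunE scalerDr scalerA.
by exists (linear_of lin_h) => x c /=; rewrite -(F_wd x _ c erefl).
Qed.

Lemma fp_dual_pairing (X : lmodType R^c)
    (Psi : {linear sresR {ffun 'I_n -> X} -> E}) (h : {linear X -> dualL E P}) :
  (forall x (c : 'I_n -> R),
     h x (\sum_i c i *: v i) = Psi [ffun i => (c i : R^c) *: x]) ->
  forall t : 'I_n -> X, \sum_k h (t k) (v k) = Psi [ffun k => t k].
Proof.
move=> hPsi t; under eq_bigr do rewrite -[v _]sum_delta_scale hPsi.
rewrite -linear_sum; apply: f_equal; apply/ffunP => k.
rewrite sum_ffunE ffunE (eq_bigr (fun k' => if k' == k then t k else 0)) ?sum_if_eq //.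
by move=> k' _; rewrite !ffunE eq_sym; case: eqP => [->|]; rewrite ?scale1r ?scale0r.
Qed.

End FinitePresentationDual.

Section MatrixCriteria.
Variables (S : comNzRingType) (R : algType S) (E : lmodType S).
Hypotheses (E_inj : injective_module E) (E_cog : cogenerator_module E).
Variables (P1 P0 : lmodType R) (zeta : {linear P1 -> P0}).
Variables (a m1 : nat) (u : 'I_a -> P1) (w1 : 'I_m1 -> 'I_a -> R).
Variables (b m0 : nat) (v : 'I_b -> P0) (w0 : 'I_m0 -> 'I_b -> R).
Hypotheses (pres1 : presents u w1) (pres0 : presents v w0).
Variable z : 'I_a -> 'I_b -> R.
Hypothesis zetaE : forall k, zeta (u k) = \sum_l z k l *: v l.

Definition Dclass_mx (Y : lmodType R) :=
  forall y : 'I_a -> Y, (forall j, lcomb w1 y j = 0) ->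
  exists y' : 'I_b -> Y, (forall j, lcomb w0 y' j = 0) /\ forall k, y k = lcomb z y' k.

Definition Bclass_mx (X : lmodType R^c) :=
  forall (t : 'I_a -> X) (s : 'I_m0 -> X), (forall l, rcomb z t l = rcomb w0 s l) ->
  exists s' : 'I_m1 -> X, forall k, t k = rcomb w1 s' k.

Lemma zeta_comb (c : 'I_a -> R) :
  zeta (\sum_k c k *: u k) = \sum_l (\sum_k c k * z k l) *: v l.
Proof.
rewrite -sum_lcomb linear_sum; apply: eq_bigr => k _.
by rewrite linearZ zetaE.
Qed.

Lemma Dclass_mxP (Y : lmodType R) : Dclass zeta Y <-> Dclass_mx Y.
Proof.
split=> [DY y w1y | DY g].
  have [f fy] := fp_extend pres1 w1y; have [h fh] := DY f.
  exists (fun l => h (v l)); split=> [j|k]; rewrite lcomb_linear.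
    by rewrite fp_rel0 // linear0.
  by rewrite -zetaE -fh -[u k]sum_delta_scale fy sum_delta_scale.
have [|y' [w0y' gz]] := DY (fun k => g (u k)).
  by move=> j; rewrite lcomb_linear fp_rel0 // linear0.
have [h hy'] := fp_extend pres0 w0y'.
exists h => x; rewrite [x](fp_coefP pres1) zeta_comb hy' -sum_lcomb linear_sum.
by apply: eq_bigr => k _; rewrite linearZ gz.
Qed.

Lemma dualL_Bclass_mx (Y : lmodType R) : Dclass_mx Y -> Bclass_mx (dualL E Y).
Proof.
move=> DY t s tz; apply: (rcomb_of_annihilator E_inj) => y w1y.
have [y' [w0y' yz]] := DY y w1y.
under eq_bigr do rewrite yz; rewrite -pairing_rcomb.
under eq_bigr do rewrite tz.
by rewrite pairing_rcomb big1 // => j _; rewrite w0y' dualL0.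
Qed.

Lemma Dclass_mx_of_dualL (Y : lmodType R) : Bclass_mx (dualL E Y) -> Dclass_mx Y.
Proof.
move=> BY y w1y; apply: NNPP => no_lift.
(* A functional f separating y from the liftable vectors yields a row t over *)
(* Y^d with t z in the row space of w0, hence of the form s' w1; but then    *)
(* f y = s' (w1 y) = 0.                                                      *)
pose liftable (y : sresL {ffun 'I_a -> Y}) := exists y' : 'I_b -> Y,
  (forall j, lcomb w0 y' j = 0) /\ forall k, y k = lcomb z y' k.
have liftable_submod : is_submod liftable.
  split=> [|e x x' [y1 [w0y1 xy1]] [y2 [w0y2 xy2]]].
    exists (fun _ => 0); split=> [j|k]; rewrite ?ffunE /lcomb big1 // => *;
      exact: scaler0.
  exists (fun l => alg_sigma R e *: y1 l - y2 l); split=> [j|k].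
    by rewrite lcombB w0y1 w0y2 scaler0 subrr.
  by rewrite lcombB !ffunE xy1 xy2.
have [|f [f_lift fy]] :=
  cogenerator_separates E_cog liftable_submod (v := [ffun k => y k]).
  by move=> [y' [w0y' yz]]; apply: no_lift; exists y'; split=> // k; rewrite -yz ffunE.
pose t k := dual_delta k f.
have [s tz] : exists s : 'I_m0 -> dualL E Y, forall l, rcomb z t l = rcomb w0 s l.
  apply: (rcomb_of_annihilator E_inj) => y' w0y'.
  rewrite pairing_rcomb dual_delta_sum; apply: f_lift.
  by exists y'; split=> // k; rewrite ffunE.
have [s' ts'] := BY t s tz.
move: fy; rewrite -dual_delta_sum (eq_bigr (fun k => rcomb w1 s' k (y k))) => [|k _];
  last by rewrite -ts'.
by rewrite pairing_rcomb big1 ?eqxx // => j _; rewrite w1y dualL0.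
Qed.

Lemma Bclass_mx_functional (X : lmodType R^c) (g : {linear X -> dualL E P1}) :
  Bclass_mx X -> exists Psi : {linear sresR {ffun 'I_b -> X} -> E},
    (forall t, Psi [ffun l => rcomb z t l] = \sum_k g (t k) (u k)) /\
    (forall s, Psi [ffun l => rcomb w0 s l] = 0).
Proof.
move=> BX.
pose U := sresR ({ffun 'I_a -> X} * {ffun 'I_m0 -> X})%type.
have lin_comb : linear (fun ts : U =>
    [ffun l => rcomb z ts.1 l + rcomb w0 ts.2 l] : sresR {ffun 'I_b -> X}).
  move=> e x y; apply/ffunP => l; rewrite !ffunE /= /sres_scale.
  under [rcomb z _ l]rcomb_ext do rewrite !ffunE.
  under [rcomb w0 _ l]rcomb_ext do rewrite !ffunE.
  by rewrite !rcombD !rcombZ scalerDr addrACA.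
have lin_pair : linear (fun ts : U => \sum_k g (ts.1 k) (u k)).
  move=> e x y; rewrite scaler_sumr -big_split; apply: eq_bigr => k _ /=.
  by rewrite !ffunE linearD linearZ /=; congr (_ + _); exact: dualLZ.
have [|Psi PsiE] := injective_extend_ker E_inj (linear_of lin_comb) (linear_of lin_pair).
  move=> [t s] /= /ffunP ts0.
  have [|s' ts'] := BX t (fun j => - s j).
    move=> l; rewrite rcombN; apply/eqP; rewrite -addr_eq0.
    by have := ts0 l; rewrite !ffunE => ->.
  under eq_bigr do rewrite ts'.
  by rewrite pairing_rcomb_linear big1 // => j _; rewrite fp_rel0 // dualL0.
exists Psi; split=> [t|s].
  rewrite (eq_bigr (fun k => g ([ffun k => t k] k) (u k))) => [|k _];
    last by rewrite ffunE.
  rewrite -[RHS](PsiE ([ffun k => t k], 0)) /=.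
  apply: f_equal; apply/ffunP => l; rewrite !ffunE [rcomb w0 _ l]rcomb0 ?addr0 => [|j];
    last by rewrite ffunE.
  by apply: rcomb_ext => k; rewrite ffunE.
have := PsiE (0, [ffun j => s j]); rewrite /= big1 => [<-|k _]; last first.
  by rewrite ffunE linear0.
apply: f_equal; apply/ffunP => l; rewrite !ffunE [rcomb z _ l]rcomb0 ?add0r => [|k];
  last by rewrite ffunE.
by apply: rcomb_ext => j; rewrite ffunE.
Qed.

Lemma Bclass_of_mx (X : lmodType R^c) : Bclass_mx X -> Bclass (dualmap E zeta) X.
Proof.
move=> BX g; have [Psi [Psi_z Psi_w0]] := Bclass_mx_functional g BX.
have [h hPsi] := fp_dual_extend pres0 Psi_w0.
exists h => x; apply: dual_ext => p /=.
rewrite [p](fp_coefP pres1) zeta_comb hPsi dualL_sum.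
set c := fp_coef pres1 _.
rewrite (eq_bigr (fun k => g ((c k : R^c) *: x) (u k))) => [|k _];
  last by rewrite linearZ.
rewrite -Psi_z; apply: f_equal; apply/ffunP => l; rewrite !ffunE /rcomb scaler_suml.
by apply: eq_bigr => k _; rewrite scalerA.
Qed.

Lemma Bclass_mx_of_Bclass (X : lmodType R^c) : Bclass (dualmap E zeta) X -> Bclass_mx X.
Proof.
move=> BX t s tz; apply: NNPP => t_out.
(* A functional f separating t from the row space of w1 defines g : X -> P1^d; *)
(* factoring g through zeta^d turns f t into a pairing with t z = s w0, i.e. 0. *)
pose in_rowspace (t : sresR {ffun 'I_a -> X}) :=
  exists s' : 'I_m1 -> X, forall k, t k = rcomb w1 s' k.
have rowspace_submod : is_submod in_rowspace.
  split=> [|e x x' [s1 xs1] [s2 xs2]].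
    by exists (fun _ => 0) => k; rewrite ffunE (rcomb0 w1 (fun _ => erefl)).
  exists (fun j => alg_sigma_c R e *: s1 j - s2 j) => k.
  by rewrite rcombD rcombN rcombZ !ffunE /= /sres_scale xs1 xs2.
have [|f [f_row ft]] :=
  cogenerator_separates E_cog rowspace_submod (v := [ffun k => t k]).
  by move=> [s' ts']; apply: t_out; exists s' => k; rewrite -ts' ffunE.
have [|g gf] := fp_dual_extend pres1 (Psi := f).
  by move=> s'; apply: f_row; exists s' => k; rewrite ffunE.
have [h gh] := BX g.
move: ft; rewrite -(fp_dual_pairing gf).
rewrite (eq_bigr (fun k => h (t k) (zeta (u k)))) => [|k _]; last by rewrite gh.
under eq_bigr do rewrite zetaE; rewrite -pairing_rcomb_linear.
under eq_bigr do rewrite tz.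
by rewrite pairing_rcomb_linear big1 ?eqxx // => j _; rewrite fp_rel0 // dualL0.
Qed.

Lemma Bclass_mx_prod : closed_under_products Bclass_mx.
Proof.
move=> I M D pr prodD BM t s tz.
have row i : exists s' : 'I_m1 -> M i, forall k, pr i (t k) = rcomb w1 s' k.
  by apply: (BM i _ (fun j => pr i (s j))) => l; rewrite -!linear_rcomb tz.
have [s' ts'] : exists s' : forall i, 'I_m1 -> M i,
    forall i k, pr i (t k) = rcomb w1 (s' i) k.
  exists (fun i => proj1_sig (constructive_indefinite_description _ (row i))) => i.
  exact: proj2_sig (constructive_indefinite_description _ (row i)).
have [d prd] := choice (fun j d => forall i, pr i d = s' i j)
  (fun j => is_product_tuple prodD (fun i => s' i j)).
exists d => k; apply: (is_product_eq prodD) => i.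
by rewrite linear_rcomb ts'; apply: rcomb_ext => j; rewrite prd.
Qed.

Lemma dualL_Bclass (Y : lmodType R) :
  Dclass zeta Y -> Bclass (dualmap E zeta) (dualL E Y).
Proof. by move=> /Dclass_mxP /dualL_Bclass_mx /Bclass_of_mx. Qed.

Lemma Bclass_prod : closed_under_products (Bclass (dualmap E zeta)).
Proof.
move=> I M D pr prodD BM; apply: Bclass_of_mx; apply: (Bclass_mx_prod prodD) => i.
exact: Bclass_mx_of_Bclass.
Qed.

Lemma Dclass_of_dualL (Y : lmodType R) :
  Bclass (dualmap E zeta) (dualL E Y) -> Dclass zeta Y.
Proof. by move=> /Bclass_mx_of_Bclass /Dclass_mx_of_dualL /Dclass_mxP. Qed.

Lemma Dclass_sum : closed_under_sums (Dclass zeta).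
Proof.
move=> I M D inj coD DM; apply: Dclass_of_dualL.
apply: Bclass_prod (dual_coproduct coD) _ => i.
exact: dualL_Bclass.
Qed.

Lemma partial_silting_dualL (M : lmodType R) :
  partial_silting zeta M <-> partial_cosilting (dualmap E zeta) (dualL E M).
Proof.
split=> [[DM _]|[BM _]]; split; last exact: Dclass_sum.
- exact: dualL_Bclass.
- exact: Bclass_prod.
- exact: Dclass_of_dualL.
Qed.

End MatrixCriteria.

Theorem proposition3p6
  (S : comNzRingType) (R : algType S) (E : lmodType S)
  (E_inj : injective_module E) (E_cog : cogenerator_module E)
  (M P0 P1 P2 : lmodType R)
  (xi : {linear P2 -> P1}) (zeta : {linear P1 -> P0}) (pi : {linear P0 -> M})
  (pres : projective_presentation xi zeta pi) :
  (* (1) *)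
  (forall X : lmodType R^c,
      Bclass (dualmap E zeta) X -> Dclass zeta (dualR E X)) /\
  (* (2) *)
  (finitely_presented P0 -> finitely_presented P1 -> finitely_presented P2 ->
   forall Y : lmodType R,
      Dclass zeta Y -> Bclass (dualmap E zeta) (dualL E Y)) /\
  (* (3) *)
  (finitely_presented P0 -> finitely_presented P1 -> finitely_presented P2 ->
   (partial_silting zeta M <-> partial_cosilting (dualmap E zeta) (dualL E M))).
Proof.
split; first by move=> X; apply: dualR_Dclass.
suff fp_parts : finitely_presented P0 -> finitely_presented P1 ->
    (forall Y, Dclass zeta Y -> Bclass (dualmap E zeta) (dualL E Y)) /\
    (partial_silting zeta M <-> partial_cosilting (dualmap E zeta) (dualL E M)).
  by split=> fp0 fp1 _; case: (fp_parts fp0 fp1).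
move=> [b [m0 [v [w0 pres0]]]] [a [m1 [u [w1 pres1]]]].
have zetaE k : zeta (u k) = \sum_l fp_coef pres0 (zeta (u k)) l *: v l.
  exact: fp_coefP.
split=> [Y|].
- exact: (dualL_Bclass E_inj pres1 pres0 zetaE).
- exact: (partial_silting_dualL E_inj E_cog pres1 pres0 zetaE M).
Qed.
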